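(* Let $(W,S)$ be a Coxeter group with $m_{st}\in\{1,2,3\}$ for all $s,t\in S$, in the one-parameter case, and let $(\mathfrak C,I,m)$ be a $W$-graph with weights in $\mathbb Z[v^{\pm1}]$ all of which are nonnegative integers, i.e. $m^s_{xy}\in\mathbb N$ for all $x,y\in\mathfrak C$, $s\in S$. Let $x,y\in\mathfrak C$ be such that $I(x)$ and $I(y)$ are joined by a transversal edge of the compatibility graph. Then $m^s_{xy}=m^t_{yx}\in\{0,1\}$ for all $s\in I(x)\setminus I(y)$ and $t\in I(y)\setminus I(x)$.
   Context: One-parameter case: $\Gamma=\mathbb Z$, $L(s)=1$, $v_s=v$, $H$ the $\mathbb Z[v^{\pm1}]$-algebra with generators $T_s$, relations $T_s^2=1+(v-v^{-1})T_s$ and braid relations $T_sT_tT_s\cdots=T_tT_sT_t\cdots$ ($m_{st}$ factors). A $W$-graph with weights in a commutative $\mathbb Z[v^{\pm1}]$-algebra $k$ is a set $\mathfrak C$ with a map $I:\mathfrak C\to2^S$ and column-finite matrices $m^s\in k^{\mathfrak C\times\mathfrak C}$ ($s\in S$) such that $m^s_{xy}\neq0\Rightarrow s\in I(x)\setminus I(y)$ and the matrices $\omega(T_s)_{xy}:=-v^{-1}$ if $x=y$, $s\in I(x)$; $v$ if $x=y$, $s\notin I(x)$; $m^s_{xy}$ otherwise, define a representation of $H$ on the free module $k^{(\mathfrak C)}$. Two subsets $I,J\subseteq S$ are joined by a transversal edge of the compatibility graph if $I\setminus J\neq\emptyset$, $J\setminus I\neq\emptyset$, and every $s\in I\setminus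 J$ is joined to every $t\in J\setminus I$ in the Dynkin diagram (i.e. $m_{st}\ge3$). *)

From HB Require Import structures.
From mathcomp Require Import all_boot all_order all_algebra.
Set Implicit Arguments. Unset Strict Implicit. Unset Printing Implicit Defensive.
Import Order.TTheory GRing.Theory Num.Theory.
Local Open Scope ring_scope.

(* Ambient field containing Z[v^{+-1}]: the fraction field of Z[v].
   Z[v^{+-1}] embeds injectively, so identities between elements of
   Z[v^{+-1}] hold in Z[v^{+-1}] iff they hold here. *)
Definition Kv := {fraction {poly int}}.
Definition vK : Kv := FracField.tofrac ('X : {poly int}).

Section WGraph.
Variables (S C : eqType).

(* Column-finite C x C matrices over Kv, carried with a column-support
   function: sA z is a list containing every x with A x z != 0. *)
Definition cfmx := ((C -> C -> Kv) * (C -> seq C))%type.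

Definition cfid : cfmx := (fun x z => (x == z)%:R, fun z => [:: z]).

Definition cfmul (A B : cfmx) : cfmx :=
  (fun x z => \sum_(y <- undup (B.2 z)) A.1 x y * B.1 y z,
   fun z => flatten (map A.2 (B.2 z))).

(* omega(T_s) for the W-graph (C, I, m); supp s y lists a superset of the
   support of column y of m^s (column finiteness). *)
Definition omega (I : C -> pred S) (m : S -> C -> C -> nat)
    (supp : S -> C -> seq C) (s : S) : cfmx :=
  (fun x y => if x == y then (if I x s then - vK^-1 else vK)
              else (m s x y)%:R,
   fun y => y :: supp s y).

Fixpoint braidprod (w : S -> cfmx) (n : nat) (s t : S) : cfmx :=
  match n with
  | 0 => cfid
  | n'.+1 => cfmul (w s) (braidprod w n' t s)
  end.

Definition hecke_rep (mst : S -> S -> nat) (w : S -> cfmx) : Prop :=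
  (forall s x z, (cfmul (w s) (w s)).1 x z
                 = (x == z)%:R + (vK - vK^-1) * (w s).1 x z) /\
  (forall s t, s != t -> forall x z,
      (braidprod w (mst s t) s t).1 x z = (braidprod w (mst s t) t s).1 x z).

Definition is_WGraph (mst : S -> S -> nat) (I : C -> pred S)
    (m : S -> C -> C -> nat) (supp : S -> C -> seq C) : Prop :=
  (forall s x y, m s x y != 0%N -> x \in supp s y) /\
  (forall s x y, m s x y != 0%N -> I x s && ~~ I y s) /\
  hecke_rep mst (omega I m supp).

Definition transversal_edge (mst : S -> S -> nat) (J K : pred S) : Prop :=
  (exists s, J s && ~~ K s) /\ (exists t, K t && ~~ J t) /\
  (forall s t, J s && ~~ K s -> K t && ~~ J t -> (3 <= mst s t)%N).

End WGraph.

From HB Require Import structures.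
From mathcomp Require Import all_boot all_order all_algebra.
Set Implicit Arguments. Unset Strict Implicit. Unset Printing Implicit Defensive.
Import GRing.Theory Num.Theory.
Local Open Scope ring_scope.

(* Let m_st = 3 and let u, w be vertices with s in I(u) and I(w) but t not in
   I(u).  Then row u of T_t and column w of T_s are diagonal, with entries v
   and -v^-1, so the (u, w) entry of the braid relation T_s T_t T_s = T_t T_s T_t
   reads  -v^-1 (P - d) = v (P - d)  with  P = sum_a m^s_ua m^t_aw, d = [u = w],
   whence P = d as v + v^-1 != 0.
   If now m^s_xy > 0 with x, y as in the theorem, P = 1 for the t-then-s paths
   from y to y yields a vertex a with m^t_ya = m^s_ay = 1, so that s is in I(a).
   The s-then-t paths from x to a then have total weight [x = a], while the
   one through y alone has weight m^s_xy > 0: hence x = a and m^s_xy = 1 = m^t_yx. *)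

Lemma vK_neq0 : vK != 0.
Proof. by rewrite /vK -(rmorph0 (@FracField.tofrac _)) tofrac_eq polyX_eq0. Qed.

Lemma vK_addV_neq0 : vK + vK^-1 != 0.
Proof.
apply/eqP => vKV0.
have : (vK + vK^-1) * vK = 0 by rewrite vKV0 mul0r.
rewrite mulrDl mulVf ?vK_neq0 // /vK -(rmorph1 (@FracField.tofrac _)).
rewrite -rmorphM -rmorphD -(rmorph0 (@FracField.tofrac _)) => /eqP.
rewrite tofrac_eq => /eqP/(congr1 (horner^~ 0)).
by rewrite !hornerE.
Qed.

Lemma natr_Kv_inj : injective (fun n : nat => n%:R : Kv).
Proof.
move=> a b /=; rewrite -!(rmorph_nat (@FracField.tofrac _)) => /eqP.
by rewrite tofrac_eq -!polyC_natr => /eqP/polyC_inj/eqP; rewrite eqr_nat => /eqP.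
Qed.

Section SumsOverUniqLists.
Variables (R : nmodType) (T : eqType).

Lemma eq_big_uniq_supp (r1 r2 : seq T) (F : T -> R) :
  uniq r1 -> uniq r2 -> (forall a, F a != 0 -> (a \in r1) = (a \in r2)) ->
  \sum_(a <- r1) F a = \sum_(a <- r2) F a.
Proof.
move=> r1_uniq r2_uniq r12; apply: perm_big_supp.
apply: uniq_perm; rewrite ?filter_uniq // => a; rewrite !mem_filter.
by case: (eqVneq (F a) 0) => //= /r12.
Qed.

Lemma big_uniq_supp1 (r : seq T) (F : T -> R) u :
  uniq r -> (forall a, a != u -> F a = 0) -> (F u != 0 -> u \in r) ->
  \sum_(a <- r) F a = F u.
Proof.
move=> r_uniq Fu0 ur; transitivity (\sum_(a <- [:: u]) F a); last by rewrite big_seq1.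
apply: eq_big_uniq_supp => // a.
rewrite inE; case: (eqVneq a u) => [-> /ur -> // | /Fu0 ->].
by rewrite eqxx.
Qed.

End SumsOverUniqLists.

Lemma leq_term_sum (T : eqType) (r : seq T) (F : T -> nat) b :
  uniq r -> b \in r -> (F b <= \sum_(a <- r) F a)%N.
Proof. by move=> r_uniq br; rewrite (bigD1_seq b) //= leq_addr. Qed.

Section ColumnFiniteMatrices.
Variable C : eqType.
Implicit Types A B : cfmx C.

Definition cfvalid A := forall x z, A.1 x z != 0 -> x \in A.2 z.

Lemma cfid_valid : cfvalid (cfid C).
Proof. by move=> x z /=; rewrite inE; case: (eqVneq x z) => //=; rewrite eqxx. Qed.

Lemma cfmul_supp A B x y z : y \in B.2 z -> x \in A.2 y -> x \in (cfmul A B).2 z.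
Proof. by move=> yB xA; apply/flattenP; exists (A.2 y) => //; apply: map_f. Qed.

Lemma cfmul_valid A B : cfvalid A -> cfvalid B -> cfvalid (cfmul A B).
Proof.
move=> vA vB x z /=; apply: contraNT => xAB.
rewrite big1_seq // => y /andP[_ _]; apply/eqP; rewrite mulf_eq0.
apply: contraNT xAB; rewrite negb_or => /andP[/vA xA /vB yB].
exact: cfmul_supp yB xA.
Qed.

Lemma cfmulE A B x z :
  (cfmul A B).1 x z = \sum_(y <- undup (B.2 z)) A.1 x y * B.1 y z.
Proof. by []. Qed.

Lemma cfmul1 A x z : (cfmul A (cfid C)).1 x z = A.1 x z.
Proof. by rewrite /= big_seq1 eqxx mulr1. Qed.

Lemma cfmul1_supp A z : (cfmul A (cfid C)).2 z = A.2 z.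
Proof. by rewrite /= cats0. Qed.

Lemma cfmul_row1 A B x z u : cfvalid B -> (forall a, a != u -> A.1 x a = 0) ->
  (cfmul A B).1 x z = A.1 x u * B.1 u z.
Proof.
move=> vB Axu; apply: big_uniq_supp1; rewrite ?undup_uniq //.
  by move=> a /Axu ->; rewrite mul0r.
by rewrite mem_undup mulf_eq0 negb_or => /andP[_ /vB].
Qed.

Lemma cfmul_col1 A B x z u : (forall b, b != u -> B.1 b z = 0) -> u \in B.2 z ->
  (cfmul A B).1 x z = A.1 x u * B.1 u z.
Proof.
move=> Buz uB; apply: big_uniq_supp1; rewrite ?undup_uniq ?mem_undup //.
by move=> a /Buz ->; rewrite mulr0.
Qed.

End ColumnFiniteMatrices.

Section BraidRelationEntries.
Variables (S C : eqType) (mst : S -> S -> nat) (I : C -> pred S)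
  (m : S -> C -> C -> nat) (supp : S -> C -> seq C).
Hypothesis HW : is_WGraph mst I m supp.
Local Notation om := (omega I m supp).

Lemma wgraph_supp r a b : m r a b != 0%N -> a \in supp r b.
Proof. by case: HW => Hsupp _; apply: Hsupp. Qed.

Lemma wgraph_weight_descent r a b : m r a b != 0%N -> I a r && ~~ I b r.
Proof. by case: HW => _ [HI _]; apply: HI. Qed.

Lemma wgraph_weight_eq0 r a b : ~~ (I a r && ~~ I b r) -> m r a b = 0%N.
Proof. by apply: contraNeq; apply: wgraph_weight_descent. Qed.

Lemma omega_diag r a : (om r).1 a a = if I a r then - vK^-1 else vK.
Proof. by rewrite /= eqxx. Qed.

Lemma omega_offdiag r a b : a != b -> (om r).1 a b = (m r a b)%:R.
Proof. by move=> /negbTE ab; rewrite /= ab. Qed.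

Lemma omega_supp r a b : (a == b) || (a \in supp r b) -> a \in (om r).2 b.
Proof. by rewrite inE. Qed.

Lemma omega_valid r : cfvalid (om r).
Proof.
move=> a b; case: (eqVneq a b) => [-> _ | ab]; first by rewrite omega_supp ?eqxx.
rewrite omega_offdiag // => mab; apply: omega_supp.
by rewrite wgraph_supp ?orbT //; apply: contraNneq mab => ->.
Qed.

Variables (s t : S) (u w : C).
Hypotheses (ius : I u s) (iut : ~~ I u t) (iws : I w s).
Local Notation paths := (\sum_(a <- undup (supp t w)) m s u a * m t a w)%N.

Lemma omega_prod_entry a : (om s).1 u a * (om t).1 a w
  = (m s u a * m t a w)%:R - ((u == w) && (a == u))%:R.
Proof.
case: (eqVneq a u) => [-> | au].
  rewrite omega_diag ius (wgraph_weight_eq0 (r := s)) ?andbN // mul0n sub0r.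
  case: (eqVneq u w) => [<- | uw].
    by rewrite omega_diag (negbTE iut) mulNr mulVf ?vK_neq0.
  by rewrite omega_offdiag // (wgraph_weight_eq0 (r := t)) ?(negbTE iut) // mulr0 oppr0.
rewrite omega_offdiag 1?eq_sym // andbF subr0.
case: (eqVneq a w) => [-> | aw]; last by rewrite omega_offdiag // natrM.
by rewrite (wgraph_weight_eq0 (r := s) (b := w)) ?iws ?andbF // mul0r.
Qed.

Lemma omega_prod_sum r : uniq r -> w \in r -> {subset supp t w <= r} ->
  \sum_(a <- r) (om s).1 u a * (om t).1 a w = paths%:R - (u == w)%:R.
Proof.
move=> r_uniq wr supp_r; rewrite (eq_bigr _ (fun a _ => omega_prod_entry a)).
rewrite sumrB natr_sum; congr (_ - _).
  apply: eq_big_uniq_supp; rewrite ?undup_uniq // => a.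
  move=> paths_a; have maw : m t a w != 0%N.
    by apply: contraNneq paths_a => ->; rewrite muln0.
  by rewrite mem_undup supp_r ?wgraph_supp.
case: (eqVneq u w) => [uw | uw]; last by rewrite big1.
rewrite (big_uniq_supp1 (u := u)) ?eqxx // => [a /negbTE -> // | _].
by rewrite uw.
Qed.

Lemma braid_sts_entry :
  (braidprod om 3 s t).1 u w = (paths%:R - (u == w)%:R) * - vK^-1.
Proof.
set N := cfmul (om t) (cfmul (om s) (cfid C)).
have w_sw : w \in (cfmul (om s) (cfid C)).2 w by rewrite cfmul1_supp omega_supp ?eqxx.
have col_w a : N.1 a w = (om t).1 a w * (om s).1 w w.
  rewrite (@cfmul_col1 _ _ _ _ _ w) ?cfmul1 // => b bw.
  rewrite cfmul1 omega_offdiag //.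
  by rewrite (wgraph_weight_eq0 (r := s)) ?iws ?andbF.
have in_col a : (a == w) || (a \in supp t w) -> a \in undup (N.2 w).
  by move=> aw; rewrite mem_undup (cfmul_supp w_sw) ?omega_supp.
change (braidprod om 3 s t) with (cfmul (om s) N).
rewrite cfmulE (eq_bigr _ (fun a _ => congr1 _ (col_w a))).
under eq_bigr do rewrite mulrA.
rewrite -big_distrl omega_prod_sum ?undup_uniq ?omega_diag ?iws ?in_col ?eqxx //.
by move=> a aw; rewrite in_col ?aw ?orbT.
Qed.

Lemma braid_tst_entry :
  (braidprod om 3 t s).1 u w = vK * (paths%:R - (u == w)%:R).
Proof.
change (braidprod om 3 t s) with (cfmul (om t) (cfmul (om s) (cfmul (om t) (cfid C)))).
rewrite (@cfmul_row1 _ _ _ _ _ u); last first.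
- by move=> a ua; rewrite omega_offdiag 1?eq_sym // wgraph_weight_eq0 ?(negbTE iut).
- exact: cfmul_valid (omega_valid (r := s))
           (cfmul_valid (omega_valid (r := t)) (@cfid_valid C)).
rewrite omega_diag (negbTE iut); congr (_ * _).
rewrite cfmulE (eq_bigr _ (fun a _ => congr1 _ (cfmul1 _ a w))).
rewrite cfmul1_supp omega_prod_sum ?undup_uniq ?mem_undup ?omega_supp ?eqxx //.
by move=> a aw; rewrite mem_undup omega_supp ?aw ?orbT.
Qed.

Lemma braid3_paths : s != t -> mst s t = 3%N -> paths = (u == w).
Proof.
case: HW => _ [_ [_ braid]] st mst3.
have := braid s t st u w; rewrite mst3 braid_sts_entry braid_tst_entry.
set d := _ - _ => braid_uw.
have : d * (vK + vK^-1) == 0 by rewrite mulrDr mulrC -braid_uw mulrN addNr.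
rewrite mulf_eq0 (negbTE vK_addV_neq0) orbF subr_eq0 => /eqP.
exact: natr_Kv_inj.
Qed.

End BraidRelationEntries.

Lemma transversal_weight_eq1 (S C : eqType) (mst : S -> S -> nat)
  (I : C -> pred S) (m : S -> C -> C -> nat) (supp : S -> C -> seq C)
  (HW : is_WGraph mst I m supp) (s t : S) (x y : C) :
  s != t -> mst s t = 3%N -> mst t s = 3%N ->
  I x s -> ~~ I x t -> I y t -> ~~ I y s -> (0 < m s x y)%N ->
  m t y x = 1%N /\ m s x y = 1%N.
Proof.
move=> st mst3 mts3 ixs ixt iyt iys mxy_gt0.
have ts : t != s by rewrite eq_sym.
have loop_y := braid3_paths HW iyt iys iyt ts mts3; rewrite eqxx in loop_y.
have [a [ay _ /eqP]] := sum_nat_seq_eq1 loop_y.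
rewrite muln_eq1 => /andP[/eqP mya /eqP may] _.
have /andP[ias _] : I a s && ~~ I y s by rewrite (wgraph_weight_descent HW) ?may.
have y_ta : y \in undup (supp t a) by rewrite mem_undup (wgraph_supp HW) ?mya.
have := leq_term_sum (fun b => m s x b * m t b a)%N (undup_uniq _) y_ta.
rewrite (braid3_paths HW ixs ixt ias st mst3) /= mya muln1.
case: (eqVneq x a) => [xa mxy_le1 | _]; last by rewrite leqNgt mxy_gt0.
by rewrite -xa in mya; split; last by apply/eqP; rewrite eqn_leq mxy_le1.
Qed.

Theorem lemma4p5p5 (S C : eqType) (mst : S -> S -> nat)
  (mst_sym : forall s t, mst s t = mst t s)
  (mst_diag : forall s, mst s s = 1%N)
  (mst_off : forall s t, s != t -> mst s t = 2%N \/ mst s t = 3%N)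
  (I : C -> pred S) (m : S -> C -> C -> nat) (supp : S -> C -> seq C)
  (HW : is_WGraph mst I m supp)
  (x y : C) (Hxy : transversal_edge mst (I x) (I y)) :
  forall s t, I x s && ~~ I y s -> I y t && ~~ I x t ->
    m s x y = m t y x /\ (m s x y <= 1)%N.
Proof.
move=> s t Hs Ht; have [_ [_ joined]] := Hxy.
have mst_ge3 := joined s t Hs Ht.
case/andP: Hs => ixs iys; case/andP: Ht => iyt ixt.
have st : s != t by apply: contraNneq ixt => <-.
have mst3 : mst s t = 3%N by case: (mst_off s t st) mst_ge3 => ->.
have mts3 : mst t s = 3%N by rewrite mst_sym.
have ts : t != s by rewrite eq_sym.
case: (posnP (m s x y)) => [mxy0 | mxy_gt0].
  case: (posnP (m t y x)) => [myx0 | myx_gt0]; first by rewrite mxy0 myx0.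
  have [mxy1 _] := transversal_weight_eq1 HW ts mts3 mst3 iyt iys ixs ixt myx_gt0.
  by rewrite mxy0 in mxy1.
by have [-> ->] := transversal_weight_eq1 HW st mst3 mts3 ixs ixt iyt iys mxy_gt0.
Qed.
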